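(* Let $\mathcal D$ be a $(\gamma,V)$-stable distribution of $\mathbf X$. Let $E_*$ be an optimal equivalence class, let $G^*\in E_*$, and let $F\subseteq G^*$ be the set of families of the variables of $\bar V$ in $G^*$. Then: (1) $G^*\setminus F\in\mathcal G_V$; (2) $\mathcal S(G^*\setminus F)=\max_{G\in\mathcal G_V}\mathcal S(G)$; (3) the score of $F$ is maximal among the legal family sets for $\bar V$.
   Context: $\mathbf X=(X_1,\dots,X_d)$ is a random vector; $k$ a fixed positive integer. A family is $\langle X_i,\Pi\rangle$ with $\Pi\subseteq\mathbf X\setminus\{X_i\}$, $|\Pi|\le k$, and $H(\langle X_i,\Pi\rangle)=H(X_i\mid\Pi)$; $\mathcal F_{d,k}$ is the set of families. $\mathcal G_{d,k}$ = DAGs over $\mathbf X$ with in-degree $\le k$, identified with their family sets; for a family set $F$, $\mathcal S(F)=-\sum_{f\in F}H(f)$; $\mathcal S^*=\max_{G\in\mathcal G_{d,k}}\mathcal S(G)$. Markov equivalence classes (ECs) on $\mathcal G_{d,k}$ group DAGs with the same conditional independence constraints and share a score; an optimal EC has score $\mathcal S^*$. For $V\subseteq\mathbf X$, $\bar V:=\mathbf X\setminus V$, and $\mathcal G_V$ is the set of DAGs over $V$ with in-degree at most $k$. A legal family set for $\bar V$ is a set $F\subseteq\mathcal F_{d,k}$ containing exactly one family for each variable in $\bar V$ and no other families, and having no (directed) cycles. $(\gamma,V)$-stable: for $\gamma>0$ and $V\subseteq\mathbf X$, (1) in every $G\in\mathcal G_{d,k}$ with $\mathcal S(G)\ge\mathcal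 S^*-\gamma$ all parents of every variable in $V$ are in $V$; (2) for the marginal distribution on $V$ (over $\mathcal G_V$) there is a unique optimal EC and the score gap between the best and second-best EC is more than $\gamma$. *)

From HB Require Import structures.
From mathcomp Require Import all_boot all_order all_algebra.
From mathcomp Require Import boolp reals exp.
Set Implicit Arguments. Unset Strict Implicit. Unset Printing Implicit Defensive.
Import Order.TTheory GRing.Theory Num.Theory.
Local Open Scope ring_scope.

(* Variables are X_0, ..., X_{d-1}, indexed by 'I_d.  X_i takes values in the
   finite set T i; outcomes of the random vector are elements of [outcome T]. *)
Definition outcome (d : nat) (T : 'I_d -> finType) := {dffun forall i : 'I_d, T i}.

Section Entropy.
Variables (R : realType) (d : nat) (T : 'I_d -> finType).
Variable p : outcome T -> R.

Definition is_pmf := (forall x, 0 <= p x) /\ \sum_(x : outcome T) p x = 1.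

Definition marg (S : {set 'I_d}) (x : outcome T) : R :=
  \sum_(y : outcome T | [forall j in S, y j == x j]) p y.

(* conditional entropy H(X_i | X_Pi) = E[ - ln P(X_i | X_Pi) ]
   (terms with p x = 0 contribute 0, i.e. 0 log 0 = 0) *)
Definition condH (i : 'I_d) (Pi : {set 'I_d}) : R :=
  - \sum_(x : outcome T) p x * ln (marg (i |: Pi) x / marg Pi x).
End Entropy.

Section Graphs.
Variables (d k : nat).

Definition fam := ('I_d * {set 'I_d})%type.

Definition is_family (f : fam) : bool := (f.1 \notin f.2) && (#|f.2| <= k)%N.

Definition edge (F : {set fam}) : rel 'I_d :=
  fun x y => [exists Pi : {set 'I_d}, ((y, Pi) \in F) && (x \in Pi)].

Definition acyclic (F : {set fam}) : Prop :=
  forall x y, edge F x y -> ~~ connect (edge F) y x.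

Definition legal_for (W : {set 'I_d}) (F : {set fam}) : Prop :=
  [/\ forall f, f \in F -> is_family f,
      forall f, f \in F -> f.1 \in W,
      forall v, v \in W -> exists2 f, f \in F & f.1 = v,
      forall f g, f \in F -> g \in F -> f.1 = g.1 -> f = g
    & acyclic F].

Definition dag_dk (G : {set fam}) : Prop := legal_for setT G.

Definition dag_V (V : {set 'I_d}) (G : {set fam}) : Prop :=
  legal_for V G /\ forall f, f \in G -> f.2 \subset V.

(* the empty DAGs, used as default elements in the maxima below *)
Definition empty_dag (W : {set 'I_d}) : {set fam} := [set (i, set0) | i in W].

Definition adj (F : {set fam}) : rel 'I_d := fun x y => edge F x y || edge F y x.

Definition active_trail (F : {set fam}) (Z : {set 'I_d}) (s : seq 'I_d) : Prop :=
  match s with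
  | [::] => False
  | x :: t =>
    [/\ path (adj F) x t, uniq s &
      forall j, (0 < j)%N -> (j.+1 < size s)%N ->
        let a := nth x s j.-1 in let b := nth x s j in let c := nth x s j.+1 in
        if edge F a b && edge F c b
        then exists2 z, z \in Z & connect (edge F) b z
        else b \notin Z]
  end.

Definition dsep (F : {set fam}) (a b : 'I_d) (Z : {set 'I_d}) : Prop :=
  ~ exists s, [/\ active_trail F Z s, head a s = a & last a s = b].

Definition markov_equiv (V : {set 'I_d}) (G1 G2 : {set fam}) : Prop :=
  forall a b (Z : {set 'I_d}), a \in V -> b \in V -> Z \subset V -> a != b ->
    a \notin Z -> b \notin Z -> (dsep G1 a b Z <-> dsep G2 a b Z).
End Graphs.

Section Scores.
Variables (R : realType) (d k : nat) (T : 'I_d -> finType) (p : outcome T -> R).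

Definition score (F : {set fam d}) : R := - \sum_(f in F) condH p f.1 f.2.

Definition Sstar : R :=
  \big[Num.max/score (empty_dag setT)]_(G : {set fam d} | `[< dag_dk k G >]) score G.

(* max over G_V of the score (for the marginal on V, whose conditional
   entropies H(X_i | Pi), Pi in V, coincide with those of the joint) *)
Definition SstarV (V : {set 'I_d}) : R :=
  \big[Num.max/score (empty_dag V)]_(G : {set fam d} | `[< dag_V k V G >]) score G.

Definition stable (gamma : R) (V : {set 'I_d}) : Prop :=
  [/\ 0 < gamma,
      (forall G : {set fam d}, dag_dk k G -> Sstar - gamma <= score G ->
         forall f, f \in G -> f.1 \in V -> f.2 \subset V) &
      exists2 G0 : {set fam d}, dag_V k V G0 /\ score G0 = SstarV V &
        (forall G, dag_V k V G -> score G = SstarV V -> markov_equiv V G G0) /\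
        (forall G, dag_V k V G -> ~ markov_equiv V G G0 ->
           score G < SstarV V - gamma)].
End Scores.

(** By the first stability condition, the families of an optimal DAG G* that
    belong to variables of V have all their parents in V, so G* splits into a
    DAG over V and a legal family set F for the complement of V, with no edge
    from the complement back into V.  Conversely, a DAG over V and a legal
    family set for the complement always glue into a DAG over X, because a
    directed path that leaves V can never come back; the score of the union is
    the sum of the scores.  Swapping either part of G* for a competitor thus
    yields a DAG, and optimality of G* bounds the competitor's score by that of
    the part it replaces.  Only the first stability condition (with γ > 0) is
    needed. *)

From HB Require Import structures.
From mathcomp Require Import all_boot all_order all_algebra.
From mathcomp Require Import boolp reals exp.
Import Order.TTheory GRing.Theory Num.Theory.
Local Open Scope ring_scope.

Set Implicit Arguments.
Unset Strict Implicit.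

Section ConnectClosed.
Variable T : finType.
Implicit Types (e : rel T) (S : pred T).

Lemma connect_sub_from_closed e e' S :
  (forall a b, a \in S -> e a b -> (b \in S) && e' a b) ->
  forall x y, x \in S -> connect e x y -> connect e' x y.
Proof.
move=> closedS x y xS /connectP[q e_q ->] {y}.
elim: q x xS e_q => [|z q IHq] x xS /=; first by rewrite connect0.
case/andP=> /(closedS _ _ xS)/andP[zS e'xz] /(IHq _ zS).
exact/connect_trans/connect1.
Qed.

Lemma connect_sub_into_coclosed e e' S :
  (forall a b, b \in S -> e a b -> (a \in S) && e' a b) ->
  forall x y, y \in S -> connect e x y -> connect e' x y.
Proof.
move=> coclosedS x y yS.
rewrite -[connect e x y]connect_rev -[connect e' x y]connect_rev.
by apply: connect_sub_from_closed yS => a b aS /(coclosedS _ _ aS).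
Qed.

End ConnectClosed.

Section FamilySets.
Variables (d k : nat).
Implicit Types (V W U : {set 'I_d}) (A B G : {set fam d}).

Lemma edge_setU A B x y : edge (A :|: B) x y = edge A x y || edge B x y.
Proof.
apply/existsP/orP => [[Pi /andP[]]|].
- by rewrite in_setU => /orP[] fPi xPi; [left|right]; apply/existsP; exists Pi;
    rewrite fPi.
- by case=> /existsP[Pi /andP[fPi xPi]]; exists Pi; rewrite in_setU fPi ?orbT.
Qed.

Lemma edge_subset A B : A \subset B -> subrel (edge A) (edge B).
Proof.
move=> sAB x y /existsP[Pi /andP[fPi xPi]]; apply/existsP; exists Pi.
by rewrite (subsetP sAB _ fPi).
Qed.

Lemma acyclic_subset A B : A \subset B -> acyclic B -> acyclic A.
Proof.
move=> sAB acycB x y /(edge_subset sAB) eBxy; apply: contraNN (acycB _ _ eBxy).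
by apply: connect_sub => a b /(edge_subset sAB)/connect1.
Qed.

Section Gluing.
Variables (V : {set 'I_d}) (A B : {set fam d}).
Hypothesis A_within_V : forall f, f \in A -> (f.1 \in V) && (f.2 \subset V).
Hypothesis B_outside_V : forall f, f \in B -> f.1 \notin V.

Lemma edge_within_V x y : edge A x y -> (x \in V) && (y \in V).
Proof.
case/existsP=> Pi /andP[fA xPi]; have /andP[/= yV PiV] := A_within_V fA.
by rewrite yV (subsetP PiV _ xPi).
Qed.

Lemma edge_into_notV x y : edge B x y -> y \notin V.
Proof. by case/existsP=> Pi /andP[/B_outside_V]. Qed.

Lemma disjoint_within_outside : [disjoint A & B].
Proof.
apply/pred0P => f /=; apply/negbTE/negP => /andP[/A_within_V/andP[fV _]].
by move/B_outside_V; rewrite fV.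
Qed.

Lemma acyclic_setU : acyclic A -> acyclic B -> acyclic (A :|: B).
Proof.
move=> acycA acycB.
have edge_into_V a b :
    b \in V -> edge (A :|: B) a b -> (a \in V) && edge A a b.
  move=> bV; rewrite edge_setU => /orP[eA|/edge_into_notV]; last by rewrite bV.
  by case/andP: (edge_within_V eA) => ->.
have edge_from_notV a b :
    a \in [predC V] -> edge (A :|: B) a b -> (b \in [predC V]) && edge B a b.
  rewrite !inE => aV; rewrite edge_setU => /orP[/edge_within_V/andP[]|eB].
    by rewrite (negbTE aV).
  by rewrite eB (edge_into_notV eB).
(* A cycle through y lies entirely inside V if y \in V, entirely outside
   otherwise. *)
move=> x y exy; apply/negP => cyx; case: (boolP (y \in V)) => yV.
- have /andP[xV eAxy] := edge_into_V _ _ yV exy.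
  apply: (negP (acycA _ _ eAxy)).
  exact: connect_sub_into_coclosed edge_into_V _ _ xV cyx.
- have eBxy : edge B x y.
    move: exy; rewrite edge_setU => /orP[/edge_within_V/andP[_]|//].
    by rewrite (negbTE yV).
  apply: (negP (acycB _ _ eBxy)).
  by apply: connect_sub_from_closed edge_from_notV _ _ _ cyx; rewrite inE.
Qed.

End Gluing.

Lemma legal_for_restrict W U G :
  legal_for k W G -> legal_for k (W :&: U) [set f in G | f.1 \in U].
Proof.
case=> G_fam G_in G_cover G_uniq acycG.
split=> [f|f|v|f g|].
- by rewrite inE => /andP[/G_fam].
- by rewrite !inE => /andP[/G_in -> ->].
- case/setIP=> /G_cover[f fG f_v] vU.
  by exists f; rewrite // inE fG f_v vU.
- by rewrite !inE => /andP[fG _] /andP[gG _]; apply: G_uniq.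
- by apply: acyclic_subset acycG; apply/subsetP => f; rewrite inE => /andP[].
Qed.

Lemma dag_V_within V A :
  dag_V k V A -> forall f, f \in A -> (f.1 \in V) && (f.2 \subset V).
Proof. by case=> [[_ A_in _ _ _] A_par] f fA; rewrite A_in // A_par. Qed.

Lemma legal_for_outside V B :
  legal_for k (~: V) B -> forall f, f \in B -> f.1 \notin V.
Proof. by case=> _ B_in _ _ _ f /B_in; rewrite inE. Qed.

Lemma dag_setU V A B :
  dag_V k V A -> legal_for k (~: V) B -> dag_dk k (A :|: B).
Proof.
move=> dagA legalB; have A_within := dag_V_within dagA.
have B_outside := legal_for_outside legalB.
case: dagA => [[A_fam _ A_cover A_uniq acycA] _].
case: legalB => [B_fam _ B_cover B_uniq acycB].
split=> [f|f|v _|f g|].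
- by rewrite in_setU => /orP[/A_fam|/B_fam].
- by rewrite in_setT.
- case: (boolP (v \in V)) => [/A_cover|vV]; first by case=> f fA <-; exists f;
    rewrite // in_setU fA.
  have [|f fB <-] := B_cover v; first by rewrite inE.
  by exists f; rewrite // in_setU fB orbT.
- rewrite !in_setU => /orP[fA|fB] /orP[gA|gB] fg; first exact: A_uniq.
  + by move: (A_within _ fA); rewrite fg (negbTE (B_outside _ gB)).
  + by move: (A_within _ gA); rewrite -fg (negbTE (B_outside _ fB)).
  + exact: B_uniq.
- exact: acyclic_setU A_within B_outside acycA acycB.
Qed.

Lemma dag_V_empty_dag V : dag_V k V (empty_dag V).
Proof.
have mem_empty f : f \in empty_dag V -> f.1 \in V /\ f.2 = set0.
  by case/imsetP=> i iV ->.
split=> [|f /mem_empty[_ ->]]; last exact: sub0set.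
split=> [f|f|v vV|[i Pi] [j Pj]|x y].
- by case/mem_empty=> _ f2; rewrite /is_family f2 in_set0 cards0.
- by case/mem_empty.
- by exists (v, set0); rewrite ?(imset_f _ vV).
- by case/mem_empty=> _ /= -> /mem_empty[_ /= ->] /= ->.
- by case/existsP=> Pi /andP[/mem_empty[_ /= ->]]; rewrite in_set0.
Qed.

End FamilySets.

Section Scores.
Variables (R : realType) (d k : nat) (T : 'I_d -> finType) (p : outcome T -> R).
Implicit Types (V : {set 'I_d}) (A B G : {set fam d}).

Lemma score_setU A B :
  [disjoint A & B] -> score p (A :|: B) = score p A + score p B.
Proof.
move=> AB; rewrite /score -opprD; congr (- _).
by rewrite (eq_bigl [predU A & B]) ?bigU // => f; rewrite in_setU.
Qed.

Lemma score_glue V A B : dag_V k V A -> legal_for k (~: V) B ->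
  score p (A :|: B) = score p A + score p B.
Proof.
move=> dagA legalB; apply/score_setU/disjoint_within_outside.
- exact: dag_V_within dagA.
- exact: legal_for_outside legalB.
Qed.

Lemma le_Sstar G : dag_dk k G -> score p G <= Sstar k p.
Proof. by move=> dagG; apply: le_bigmax_cond; apply/asboolP. Qed.

Lemma le_SstarV V G : dag_V k V G -> score p G <= SstarV k p V.
Proof. by move=> dagG; apply: le_bigmax_cond; apply/asboolP. Qed.

Lemma SstarV_le V (x : R) :
  (forall G, dag_V k V G -> score p G <= x) -> SstarV k p V <= x.
Proof.
move=> le_x; apply: bigmax_le => [|G /asboolP]; last exact: le_x.
exact/le_x/dag_V_empty_dag.
Qed.

End Scores.

Theorem lemma4 (R : realType) (d k : nat) (T : 'I_d -> finType)
    (p : outcome T -> R) (gamma : R) (V : {set 'I_d}) :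
  is_pmf p ->
  stable k p gamma V ->
  forall Gstar : {set fam d},
    dag_dk k Gstar -> score p Gstar = Sstar k p ->
    let F := [set f in Gstar | f.1 \notin V] in
    [/\ dag_V k V (Gstar :\: F),
        score p (Gstar :\: F) = SstarV k p V,
        legal_for k (~: V) F &
        forall F' : {set fam d}, legal_for k (~: V) F' -> score p F' <= score p F].
Proof.
move=> _ [gamma_gt0 parents_in_V _] G dagG scoreG F.
set A := G :\: F.
have AE : A = [set f in G | f.1 \in V].
  by apply/setP => f; rewrite !inE; case: (f \in G); case: (f.1 \in V).
have legalA : legal_for k V A.
  by rewrite AE; have := legal_for_restrict V dagG; rewrite setTI.
have legalF : legal_for k (~: V) F.
  have := legal_for_restrict (~: V) dagG; rewrite setTI.
  by congr (legal_for _ _ _); apply/setP => f; rewrite !inE.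
have dagA : dag_V k V A.
  split=> // f; rewrite AE inE => /andP[fG fV].
  by apply: parents_in_V dagG _ _ fG fV; rewrite scoreG gerBl ltW.
have GE : G = A :|: F.
  by apply/setP => f; rewrite !inE; case: (f \in G); case: (f.1 \in V).
have exchange G' F' : dag_V k V G' -> legal_for k (~: V) F' ->
    score p G' + score p F' <= score p A + score p F.
  move=> dagG' legalF'.
  rewrite -(score_glue _ dagG' legalF') -(score_glue _ dagA legalF) -GE scoreG.
  exact/le_Sstar/(dag_setU dagG' legalF').
split=> //.
- apply/le_anti; rewrite le_SstarV //=; apply: SstarV_le => G' dagG'.
  by rewrite -(lerD2r (score p F)) exchange.
- by move=> F' legalF'; rewrite -(lerD2l (score p A)) exchange.
Qed.
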